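(* Let $\mathbb{C}$ be a category of interest and $A\in\mathbb{C}$. Consider the category whose objects are split extensions $0\to A\to C\to C'\to 0$ in $\mathbb{C}$ (with fixed kernel $A$ and a chosen section) and whose morphisms are triples $(1_A,\gamma,\gamma')$ of morphisms in $\mathbb{C}$ making the evident diagrams commute, including compatibility with the sections. Let $E_A:0\to A\to A\ltimes A\to A\to 0$ be the split extension corresponding to the action of $A$ on itself by conjugation ($a\cdot a'=a+a'-a$, $a*a'=a*a'$ for $*\in\Omega_2'$). If $E_t:0\to A\to C\to B\to 0$ is a terminal object of this category, then for the unique morphism $(1_A,\gamma,\beta):E_A\to E_t$, the map $\beta:A\to B$, together with the derived action of $B$ on $A$ induced by $E_t$, is a crossed module in $\mathbb{C}$ which is an actor of $A$.
   Context: Category of interest. A category of groups with operations is a variety of universal algebras with a set of operations $\Omega=\Omega_0\cup\Omega_1\cup\Omega_2$ ($\Omega_i$ = set of $i$-ary operations) and a set of identities $\mathbb{E}$ such that: $\mathbb{E}$ contains the group laws; the group operations, written additively $0,-,+$ (addition not necessarily commutative), lie in $\Omega_0,\Omega_1,\Omega_2$ respectively, and $\Omega_0=\{0\}$; putting $\Omega_2'=\Omega_2\setminus\{+\}$ and $\Omega_1'=\Omega_1\setminus\{-\}$, whenever $*\in\Omega_2'$ also $*^\circ\in\Omega_2'$, where $x*^\circ y=y*x$; $\mathbb{E}$ contains $x*(y+z)=x*y+x*z$ for each $*\in\Omega_2'$, and $\omega(x+y)=\omega(x)+\omega(y)$, $\omega(x)*y=\omega(x*y)$ for each $\omega\in\Omega_1'$,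 $*\in\Omega_2'$. A category of interest $\mathbb{C}=(\Omega,\mathbb{E})$ is such a variety which also satisfies: (Axiom 1) $x_1+(x_2*x_3)=(x_2*x_3)+x_1$ for each $*\in\Omega_2'$; (Axiom 2) for each ordered pair $( *,\bar* )\in\Omega_2'\times\Omega_2'$ there is a word $W$ with $(x_1*x_2)\bar*x_3=W\big(x_1(x_2x_3),x_1(x_3x_2),(x_2x_3)x_1,(x_3x_2)x_1,x_2(x_1x_3),x_2(x_3x_1),(x_1x_3)x_2,(x_3x_1)x_2\big)$, each juxtaposition standing for some operation in $\Omega_2'$. Actions. For objects $A,B$ of $\mathbb{C}$, a split extension $0\to A\to E\xrightarrow{p}B\to 0$ in $\mathbb{C}$ ($p$ surjective with kernel $A$, and a morphism $s$ with $ps=1_B$) induces actions $b\cdot a=s(b)+a-s(b)$ and $b*a=s(b)*a$ ($*\in\Omega_2'$); these are the derived actions of $B$ on $A$ in $\mathbb{C}$ (one writes $a*b:=b*^\circ a$). Given such actions, $B\ltimes A$ is the algebra on $B\times A$ with $(b',a')+(b,a)=(b'+b,a'+b'\cdot a)$, $(b',a')*(b,a)=(b'*b,a'*a+a'*b+b'*a)$. Crossed modules and actors. A crossed module in $\mathbb{C}$ is a morphism $\partial:C_1\to C_0$ in $\mathbb{C}$ together with a derived action of $C_0$ on $C_1$ in $\mathbb{C}$ such that for all $r\in C_0$, $c,c'\in C_1$, $*\in\Omega_2'$: $\partial(r\cdot c)=r+\partial(c)-r$; $\partial(c)\cdot c'=c+c'-c$; $\partial(c)*c'=c*c'$; $\partial(r*c)=r*\partial(c)$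 and $\partial(c*r)=\partial(c)*r$. For $A\in\mathbb{C}$, an actor of $A$ is a crossed module $\partial:A\to\mathrm{Actor}(A)$ in $\mathbb{C}$ such that for every $C\in\mathbb{C}$ and every derived action of $C$ on $A$ in $\mathbb{C}$ there is a unique morphism $\varphi:C\to\mathrm{Actor}(A)$ in $\mathbb{C}$ with $c\cdot a=\varphi(c)\cdot a$ and $c*a=\varphi(c)*a$ for all $c\in C$, $a\in A$, $*\in\Omega_2'$. *)

Set Implicit Arguments.
Unset Strict Implicit.

(* Signatures of groups with operations:                               *)
(*   Omega0 = {0}, Omega1 = {-} + O1, Omega2 = {+} + O2,              *)
(*   with circ : O2 -> O2 the map * |-> *^o.                            *)
Record Sig := { O1 : Type; O2 : Type; circ : O2 -> O2 }.

Record alg (S : Sig) := {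
  car :> Type;
  zero : car;
  add : car -> car -> car;
  opp : car -> car;
  un : O1 S -> car -> car;
  bin : O2 S -> car -> car -> car }.

Arguments zero {S} a.
Arguments add {S} {a}.
Arguments opp {S} {a}.
Arguments un {S} {a}.
Arguments bin {S} {a}.

Inductive term (S : Sig) : Type :=
| tvar : nat -> term S
| tzero : term S
| tadd : term S -> term S -> term S
| topp : term S -> term S
| tun : O1 S -> term S -> term S
| tbin : O2 S -> term S -> term S -> term S.

Arguments tvar {S}.
Arguments tzero {S}.

Fixpoint eval (S : Sig) (X : alg S) (v : nat -> car X) (t : term S) : car X :=
  match t with
  | tvar n => v n
  | tzero => zero X
  | tadd t u => add (eval v t) (eval v u)
  | topp t => opp (eval v t)
  | tun o t => un o (eval v t)
  | tbin o t u => bin o (eval v t) (eval v u)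
  end.

Definition identity (S : Sig) : Type := (term S * term S)%type.

Definition satisfies (S : Sig) (X : alg S) (e : identity S) : Prop :=
  forall v : nat -> car X, eval v (fst e) = eval v (snd e).

Definition in_var (S : Sig) (E : identity S -> Prop) (X : alg S) : Prop :=
  forall e, E e -> satisfies X e.

Definition valid (S : Sig) (E : identity S -> Prop) (e : identity S) : Prop :=
  forall X : alg S, in_var E X -> satisfies X e.

Definition x0 {S} : term S := tvar 0.
Definition x1 {S} : term S := tvar 1.
Definition x2 {S} : term S := tvar 2.

Definition group_with_ops (S : Sig) (E : identity S -> Prop) : Prop :=
  E (tadd (tadd x0 x1) x2, tadd x0 (tadd x1 x2)) /\
  E (tadd tzero x0, x0) /\
  E (tadd x0 tzero, x0) /\
  E (tadd (topp x0) x0, tzero) /\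
  E (tadd x0 (topp x0), tzero) /\
  (forall o : O2 S, E (tbin (circ o) x0 x1, tbin o x1 x0)) /\
  (forall o : O2 S, E (tbin o x0 (tadd x1 x2), tadd (tbin o x0 x1) (tbin o x0 x2))) /\
  (forall w : O1 S, E (tun w (tadd x0 x1), tadd (tun w x0) (tun w x1))) /\
  (forall (w : O1 S) (o : O2 S), E (tbin o (tun w x0) x1, tun w (tbin o x0 x1))).

Inductive gword : Type :=
| gvar : nat -> gword
| gzero : gword
| gadd : gword -> gword -> gword
| gopp : gword -> gword.

Fixpoint gsubst (S : Sig) (W : gword) (f : nat -> term S) : term S :=
  match W with
  | gvar n => f n
  | gzero => tzero
  | gadd a b => tadd (gsubst a f) (gsubst b f)
  | gopp a => topp (gsubst a f)
  end.

(* The eight arguments of the word W in Axiom 2; ops k = (inner, outer)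
   operations used in the k-th argument. Variables x1,x2,x3 are tvar 0,1,2. *)
Definition ax2_arg (S : Sig) (ops : nat -> (O2 S * O2 S)) (k : nat) : term S :=
  let i := fst (ops k) in let o := snd (ops k) in
  match k with
  | 0 => tbin o x0 (tbin i x1 x2)
  | 1 => tbin o x0 (tbin i x2 x1)
  | 2 => tbin o (tbin i x1 x2) x0
  | 3 => tbin o (tbin i x2 x1) x0
  | 4 => tbin o x1 (tbin i x0 x2)
  | 5 => tbin o x1 (tbin i x2 x0)
  | 6 => tbin o (tbin i x0 x2) x1
  | 7 => tbin o (tbin i x2 x0) x1
  | _ => tzero
  end.

Definition cat_of_interest (S : Sig) (E : identity S -> Prop) : Prop :=
  group_with_ops E /\
  (forall o : O2 S, valid E (tadd x0 (tbin o x1 x2), tadd (tbin o x1 x2) x0)) /\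
  (forall o o' : O2 S, exists (W : gword) (ops : nat -> (O2 S * O2 S)),
      valid E (tbin o' (tbin o x0 x1) x2, gsubst W (ax2_arg ops))).

Definition is_hom (S : Sig) (X Y : alg S) (f : car X -> car Y) : Prop :=
  f (zero X) = zero Y /\
  (forall x y, f (add x y) = add (f x) (f y)) /\
  (forall x, f (opp x) = opp (f x)) /\
  (forall w x, f (un w x) = un w (f x)) /\
  (forall o x y, f (bin o x y) = bin o (f x) (f y)).

Record split_ext (S : Sig) (A B : alg S) := {
  se_mid : alg S;
  se_i : car A -> car se_mid;
  se_p : car se_mid -> car B;
  se_s : car B -> car se_mid }.

Arguments se_mid {S A B} s.
Arguments se_i {S A B} s _.
Arguments se_p {S A B} s _.
Arguments se_s {S A B} s _.

Definition is_split_ext (S : Sig) (E : identity S -> Prop) (A B : alg S)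
    (X : split_ext A B) : Prop :=
  in_var E A /\ in_var E (se_mid X) /\ in_var E B /\
  is_hom (se_i X) /\ is_hom (se_p X) /\ is_hom (se_s X) /\
  (forall a a', se_i X a = se_i X a' -> a = a') /\
  (forall m, se_p X m = zero B <-> exists a, se_i X a = m) /\
  (forall m, exists m', se_p X m' = m) /\
  (forall b, se_p X (se_s X b) = b).

Definition induces (S : Sig) (A B : alg S) (X : split_ext A B)
    (dot : car B -> car A -> car A) (op : O2 S -> car B -> car A -> car A) : Prop :=
  (forall b a, se_i X (dot b a) =
      add (add (se_s X b) (se_i X a)) (opp (se_s X b))) /\
  (forall o b a, se_i X (op o b a) = bin o (se_s X b) (se_i X a)).

Definition derived_action (S : Sig) (E : identity S -> Prop) (B A : alg S)
    (dot : car B -> car A -> car A) (op : O2 S -> car B -> car A -> car A) : Prop :=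
  exists X : split_ext A B, is_split_ext E X /\ induces X dot op.

Definition split_ext_mor (S : Sig) (A B B' : alg S)
    (X : split_ext A B) (Y : split_ext A B')
    (g : car (se_mid X) -> car (se_mid Y)) (g' : car B -> car B') : Prop :=
  is_hom g /\ is_hom g' /\
  (forall a, g (se_i X a) = se_i Y a) /\
  (forall m, se_p Y (g m) = g' (se_p X m)) /\
  (forall b, g (se_s X b) = se_s Y (g' b)).

Arguments split_ext_mor {S A B B'} X Y g g'.

Definition terminal_split_ext (S : Sig) (E : identity S -> Prop) (A B : alg S)
    (T : split_ext A B) : Prop :=
  is_split_ext E T /\
  forall (B' : alg S) (X : split_ext A B'), is_split_ext E X ->
    exists (g : car (se_mid X) -> car (se_mid T)) (g' : car B' -> car B),
      split_ext_mor X T g g' /\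
      forall h h', split_ext_mor X T h h' ->
        (forall m, h m = g m) /\ (forall b, h' b = g' b).

(*   (b',a') * (b,a) = (b'*b, a'*a + a'*b + b'*a), a'*b := b *^o a'     *)
Definition semidirect (S : Sig) (B A : alg S)
    (dot : car B -> car A -> car A) (op : O2 S -> car B -> car A -> car A) : alg S :=
  {| car := (car B * car A)%type;
     zero := (zero B, zero A);
     add := fun x y => (add (fst x) (fst y), add (snd x) (dot (fst x) (snd y)));
     opp := fun x => (opp (fst x), dot (opp (fst x)) (opp (snd x)));
     un := fun w x => (un w (fst x), un w (snd x));
     bin := fun o x y =>
       (bin o (fst x) (fst y),
        add (add (bin o (snd x) (snd y)) (op (circ o) (fst y) (snd x)))
            (op o (fst x) (snd y))) |}.

Definition conj_dot (S : Sig) (A : alg S) (a a' : car A) : car A :=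
  add (add a a') (opp a).
Definition conj_op (S : Sig) (A : alg S) (o : O2 S) (a a' : car A) : car A :=
  bin o a a'.

Definition EA (S : Sig) (A : alg S) : split_ext A A :=
  {| se_mid := semidirect (@conj_dot S A) (@conj_op S A);
     se_i := fun a => (zero A, a);
     se_p := fun x => fst x;
     se_s := fun b => (b, zero A) |}.

Definition crossed_module (S : Sig) (E : identity S -> Prop) (C1 C0 : alg S)
    (d : car C1 -> car C0)
    (dot : car C0 -> car C1 -> car C1) (op : O2 S -> car C0 -> car C1 -> car C1) : Prop :=
  in_var E C1 /\ in_var E C0 /\ is_hom d /\
  derived_action E dot op /\
  (forall r c, d (dot r c) = add (add r (d c)) (opp r)) /\
  (forall c c', dot (d c) c' = add (add c c') (opp c)) /\
  (forall o c c', op o (d c) c' = bin o c c') /\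
  (forall o r c, d (op o r c) = bin o r (d c)) /\
  (* c * r := r *^o c *)
  (forall o r c, d (op (circ o) r c) = bin o (d c) r).

Definition is_actor (S : Sig) (E : identity S -> Prop) (A Act : alg S)
    (d : car A -> car Act)
    (dot : car Act -> car A -> car A) (op : O2 S -> car Act -> car A -> car A) : Prop :=
  crossed_module E d dot op /\
  forall (C : alg S), in_var E C ->
  forall (dotC : car C -> car A -> car A) (opC : O2 S -> car C -> car A -> car A),
    derived_action E dotC opC ->
    exists phi : car C -> car Act,
      (is_hom phi /\
       (forall c a, dotC c a = dot (phi c) a) /\
       (forall o c a, opC o c a = op o (phi c) a)) /\
      forall psi : car C -> car Act,
        (is_hom psi /\
         (forall c a, dotC c a = dot (psi c) a) /\
         (forall o c a, opC o c a = op o (psi c) a)) ->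
        forall c, psi c = phi c.

From Stdlib Require Import ProofIrrelevance List.
Set Implicit Arguments.
Unset Strict Implicit.

(* In a split extension 0 -> A -> M -> B -> 0 every element of M is i(a) + s(b),
   and the operations on such normal forms see b only through its action on A
   (for products this is where Axiom 2 enters).  Hence a morphism (g, g') of
   split extensions into E_t can be retargeted to any homomorphism psi that acts
   on A like g', and terminality forces psi = g'.  This gives uniqueness in the
   universal property of the actor (existence is terminality itself) and, applied
   to a pullback of E_t, shows that elements of B acting alike on A, also after
   any unary operations, are equal.  The crossed-module identities for beta then
   follow by comparing actions, starting from beta(a).x = a + x - a and
   beta(a)*x = a*x, which is the conjugation action of E_A transported along
   (gamma, beta). *)

Record interest_laws (S : Sig) (X : alg S) : Prop := {
  addrA : forall a b c : car X, add (add a b) c = add a (add b c);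
  add0r : forall a : car X, add (zero X) a = a;
  addr0 : forall a : car X, add a (zero X) = a;
  addNr : forall a : car X, add (opp a) a = zero X;
  addrN : forall a : car X, add a (opp a) = zero X;
  binC : forall o (a b : car X), bin (circ o) a b = bin o b a;
  binDr : forall o (a b c : car X), bin o a (add b c) = add (bin o a b) (bin o a c);
  unD : forall w (a b : car X), un w (add a b) = add (un w a) (un w b);
  bin_unl : forall w o (a b : car X), bin o (un w a) b = un w (bin o a b);
  add_binC : forall o (a b c : car X), add a (bin o b c) = add (bin o b c) a;
  bin_binW : forall o o', exists (W : gword) (ops : nat -> (O2 S * O2 S)),
    forall v : nat -> car X,
      eval v (tbin o' (tbin o x0 x1) x2) = eval v (gsubst W (ax2_arg ops)) }.

Definition valuation3 (S : Sig) (X : alg S) (a b c : car X) : nat -> car X :=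
  fun n => match n with 0 => a | 1 => b | _ => c end.

Lemma interest_laws_of (S : Sig) (E : identity S -> Prop) (X : alg S) :
  cat_of_interest E -> in_var E X -> interest_laws X.
Proof.
  intros [[H1 [H2 [H3 [H4 [H5 [H6 [H7 [H8 H9]]]]]]]] [Hax1 Hax2]] HX.
  constructor.
  - intros a b c. exact (HX _ H1 (valuation3 a b c)).
  - intros a. exact (HX _ H2 (valuation3 a a a)).
  - intros a. exact (HX _ H3 (valuation3 a a a)).
  - intros a. exact (HX _ H4 (valuation3 a a a)).
  - intros a. exact (HX _ H5 (valuation3 a a a)).
  - intros o a b. exact (HX _ (H6 o) (valuation3 a b b)).
  - intros o a b c. exact (HX _ (H7 o) (valuation3 a b c)).
  - intros w a b. exact (HX _ (H8 w) (valuation3 a b b)).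
  - intros w o a b. exact (HX _ (H9 w o) (valuation3 a b b)).
  - intros o a b c. exact (Hax1 o X HX (valuation3 a b c)).
  - intros o o'. destruct (Hax2 o o') as [W [ops HW]]. exists W, ops.
    intros v. exact (HW X HX v).
Qed.

Section GroupLemmas.
Context {S : Sig} {X : alg S} (H : interest_laws X).
Implicit Types a b c : car X.

Lemma addKr a b : add (opp a) (add a b) = b.
Proof. rewrite <- (addrA H), (addNr H), (add0r H). reflexivity. Qed.

Lemma addNKr a b : add a (add (opp a) b) = b.
Proof. rewrite <- (addrA H), (addrN H), (add0r H). reflexivity. Qed.

Lemma addrK a b : add (add b a) (opp a) = b.
Proof. rewrite (addrA H), (addrN H), (addr0 H). reflexivity. Qed.

Lemma addrNK a b : add (add b (opp a)) a = b.
Proof. rewrite (addrA H), (addNr H), (addr0 H). reflexivity. Qed.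

Lemma addrI a b c : add a b = add a c -> b = c.
Proof. intros E. rewrite <- (addKr a b), E, addKr. reflexivity. Qed.

Lemma oppr_unique a b : add a b = zero X -> b = opp a.
Proof. intros E. apply (addrI (a := a)). rewrite E, (addrN H). reflexivity. Qed.

Lemma opprK a : opp (opp a) = a.
Proof. symmetry. apply oppr_unique, (addNr H). Qed.

Lemma opprD a b : opp (add a b) = add (opp b) (opp a).
Proof. symmetry. apply oppr_unique. rewrite (addrA H), addNKr, (addrN H). reflexivity. Qed.

Lemma oppr0 : opp (zero X) = zero X.
Proof. symmetry. apply oppr_unique, (add0r H). Qed.

Lemma addr_idem_eq0 a : add a a = a -> a = zero X.
Proof. intros E. apply (addrI (a := a)). rewrite E, (addr0 H). reflexivity. Qed.

Lemma un0 w : un w (zero X) = zero X.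
Proof. apply addr_idem_eq0. rewrite <- (unD H), (add0r H). reflexivity. Qed.

Lemma unN w a : un w (opp a) = opp (un w a).
Proof. apply oppr_unique. rewrite <- (unD H), (addrN H), un0. reflexivity. Qed.

Lemma bin0r o a : bin o a (zero X) = zero X.
Proof. apply addr_idem_eq0. rewrite <- (binDr H), (add0r H). reflexivity. Qed.

Lemma bin0l o a : bin o (zero X) a = zero X.
Proof. rewrite <- (binC H o a), bin0r. reflexivity. Qed.

Lemma binDl o a b c : bin o (add a b) c = add (bin o a c) (bin o b c).
Proof. rewrite <- !(binC H o c). apply (binDr H). Qed.

Lemma binNr o a b : bin o a (opp b) = opp (bin o a b).
Proof. apply oppr_unique. rewrite <- (binDr H), (addrN H), bin0r. reflexivity. Qed.

Lemma binNl o a b : bin o (opp a) b = opp (bin o a b).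
Proof. rewrite <- !(binC H o b). apply binNr. Qed.

Lemma conj_bin o a b c : add (add a (bin o b c)) (opp a) = bin o b c.
Proof. rewrite (add_binC H), addrK. reflexivity. Qed.

End GroupLemmas.

Section Homomorphisms.
Context {S : Sig} {X Y : alg S} {f : car X -> car Y} (Hf : is_hom f).

Lemma hom0 : f (zero X) = zero Y.
Proof. apply Hf. Qed.
Lemma homD x y : f (add x y) = add (f x) (f y).
Proof. apply Hf. Qed.
Lemma homN x : f (opp x) = opp (f x).
Proof. apply Hf. Qed.
Lemma homU w x : f (un w x) = un w (f x).
Proof. apply Hf. Qed.
Lemma homB o x y : f (bin o x y) = bin o (f x) (f y).
Proof. apply Hf. Qed.

End Homomorphisms.

Definition prod_alg (S : Sig) (X Y : alg S) : alg S :=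
  {| car := (car X * car Y)%type;
     zero := (zero X, zero Y);
     add := fun p q => (add (fst p) (fst q), add (snd p) (snd q));
     opp := fun p => (opp (fst p), opp (snd p));
     un := fun w p => (un w (fst p), un w (snd p));
     bin := fun o p q => (bin o (fst p) (fst q), bin o (snd p) (snd q)) |}.

Lemma eval_prod (S : Sig) (X Y : alg S) (v : nat -> car (prod_alg X Y)) (t : term S) :
  eval v t = (eval (fun n => fst (v n)) t, eval (fun n => snd (v n)) t).
Proof.
  induction t; cbn; try rewrite IHt; try rewrite IHt1, IHt2; try reflexivity.
  destruct (v n); reflexivity.
Qed.

Lemma in_var_prod (S : Sig) (E : identity S -> Prop) (X Y : alg S) :
  in_var E X -> in_var E Y -> in_var E (prod_alg X Y).
Proof.
  intros HX HY e He v. rewrite !eval_prod. f_equal; [apply HX | apply HY]; exact He.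
Qed.

Record closed (S : Sig) (X : alg S) (P : car X -> Prop) : Prop := {
  closed0 : P (zero X);
  closedD : forall x y, P x -> P y -> P (add x y);
  closedN : forall x, P x -> P (opp x);
  closedU : forall w x, P x -> P (un w x);
  closedB : forall o x y, P x -> P y -> P (bin o x y) }.

Definition sub_alg (S : Sig) (X : alg S) (P : car X -> Prop) (H : closed P) : alg S :=
  {| car := {x : car X | P x};
     zero := exist _ (zero X) (closed0 H);
     add := fun x y => exist _ _ (closedD H (proj2_sig x) (proj2_sig y));
     opp := fun x => exist _ _ (closedN H (proj2_sig x));
     un := fun w x => exist _ _ (closedU H w (proj2_sig x));
     bin := fun o x y => exist _ _ (closedB H o (proj2_sig x) (proj2_sig y)) |}.

Lemma sig_eq (T : Type) (P : T -> Prop) (x y : {t | P t}) :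
  proj1_sig x = proj1_sig y -> x = y.
Proof. destruct x, y; cbn. apply subset_eq_compat. Qed.

Lemma eval_sub (S : Sig) (X : alg S) (P : car X -> Prop) (H : closed P)
    (v : nat -> car (sub_alg H)) (t : term S) :
  proj1_sig (eval v t) = eval (fun n => proj1_sig (v n)) t.
Proof. induction t; cbn; try rewrite IHt; try rewrite IHt1, IHt2; reflexivity. Qed.

Lemma in_var_sub (S : Sig) (E : identity S -> Prop) (X : alg S) (P : car X -> Prop)
    (H : closed P) :
  in_var E X -> in_var E (sub_alg H).
Proof. intros HX e He v. apply sig_eq. rewrite !eval_sub. apply HX, He. Qed.

Fixpoint geval (S : Sig) (X : alg S) (f : nat -> car X) (W : gword) : car X :=
  match W with
  | gvar n => f n
  | gzero => zero X
  | gadd a b => add (geval f a) (geval f b)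
  | gopp a => opp (geval f a)
  end.

Lemma eval_gsubst (S : Sig) (X : alg S) (v : nat -> car X) (W : gword) (f : nat -> term S) :
  eval v (gsubst W f) = geval (fun n => eval v (f n)) W.
Proof. induction W; cbn; try rewrite IHW; try rewrite IHW1, IHW2; reflexivity. Qed.

Lemma geval_ext (S : Sig) (X : alg S) (f g : nat -> car X) (W : gword) :
  (forall n, f n = g n) -> geval f W = geval g W.
Proof. intros Hfg. induction W; cbn; try rewrite IHW; try rewrite IHW1, IHW2; auto. Qed.

Section Multipliers.
Context {S : Sig} {A M : alg S} (i : car A -> car M).

Definition agree_on (t t' : car M) : Prop :=
  forall o a, bin o t (i a) = bin o t' (i a) /\ bin o (i a) t = bin o (i a) t'.

Definition stabilizes (t : car M) : Prop :=
  forall o a, (exists a', bin o t (i a) = i a') /\ (exists a', bin o (i a) t = i a').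

(* Axiom 2 writes (x*y)*i(a) as a group word in the eight products u*(v*i(a)),
   u*(i(a)*v), (v*i(a))*u, (i(a)*v)*u with {u, v} = {x, y}; each of them only
   involves how x and y multiply elements of i(A). *)
Lemma agree_on_binl (HM : interest_laws M) (x x' y y' : car M) :
  agree_on x x' -> agree_on y y' -> stabilizes x' -> stabilizes y' ->
  forall o o' a, bin o' (bin o x y) (i a) = bin o' (bin o x' y') (i a).
Proof.
  intros Ax Ay Sx Sy o o' a.
  destruct (bin_binW HM o o') as [W [ops HW]].
  pose proof (HW (valuation3 x y (i a))) as Hxy. pose proof (HW (valuation3 x' y' (i a))) as Hxy'.
  cbn in Hxy, Hxy'. rewrite Hxy, Hxy', !eval_gsubst.
  apply geval_ext.
  assert (nested : forall t t' u u' p q, agree_on t t' -> stabilizes t' -> agree_on u u' ->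
     (bin p u (bin q t (i a)) = bin p u' (bin q t' (i a))
      /\ bin p u (bin q (i a) t) = bin p u' (bin q (i a) t'))
     /\ (bin p (bin q t (i a)) u = bin p (bin q t' (i a)) u'
      /\ bin p (bin q (i a) t) u = bin p (bin q (i a) t') u')).
  { intros t t' u u' p q At St Au.
    destruct (At q a) as [-> ->]. destruct (St q a) as [[a1 ->] [a2 ->]].
    destruct (Au p a1) as [Au1 Au2]. destruct (Au p a2) as [Au3 Au4].
    repeat split; assumption. }
  intros [|[|[|[|[|[|[|[|k]]]]]]]]; cbn; try reflexivity;
    first [ apply (nested _ _ _ _ _ _ Ay Sy Ax) | apply (nested _ _ _ _ _ _ Ax Sx Ay) ].
Qed.

End Multipliers.

Record ext_laws (S : Sig) (A B : alg S) (X : split_ext A B) : Prop := {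
  extA : interest_laws A;
  extM : interest_laws (se_mid X);
  extB : interest_laws B;
  ext_i : is_hom (se_i X);
  ext_p : is_hom (se_p X);
  ext_s : is_hom (se_s X);
  ext_inj : forall a a', se_i X a = se_i X a' -> a = a';
  ext_ker : forall m, se_p X m = zero B -> exists a, se_i X a = m;
  ext_pi : forall a, se_p X (se_i X a) = zero B;
  ext_ps : forall b, se_p X (se_s X b) = b }.

Lemma ext_laws_of (S : Sig) (E : identity S -> Prop) (A B : alg S) (X : split_ext A B) :
  cat_of_interest E -> is_split_ext E X -> ext_laws X.
Proof.
  intros HC [HA [HM [HB [Hi [Hp [Hs [Hinj [Hker [_ Hps]]]]]]]]].
  constructor; try assumption; try (apply (interest_laws_of HC); assumption).
  - intros m. apply Hker.
  - intros a. apply Hker. exists a. reflexivity.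
Qed.

Definition same_action (S : Sig) (A B : alg S) (dot : car B -> car A -> car A)
    (op : O2 S -> car B -> car A -> car A) (b b' : car B) : Prop :=
  (forall a, dot b a = dot b' a) /\ (forall o a, op o b a = op o b' a).

Section InducedAction.
Context {S : Sig} {A B : alg S} {Et : split_ext A B} (G : ext_laws Et).
Context {dot : car B -> car A -> car A} {op : O2 S -> car B -> car A -> car A}.
Hypothesis Hi : induces Et dot op.
Local Notation i := (se_i Et).
Local Notation p := (se_p Et).
Local Notation s := (se_s Et).
Local Notation same := (same_action dot op).

Lemma i_dot b a : i (dot b a) = add (add (s b) (i a)) (opp (s b)).
Proof. apply Hi. Qed.

Lemma i_op o b a : i (op o b a) = bin o (s b) (i a).
Proof. apply Hi. Qed.

Lemma bin_i_s o a b : bin o (i a) (s b) = i (op (circ o) b a).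
Proof. rewrite i_op, (binC (extM G)). reflexivity. Qed.

Lemma dot0l a : dot (zero B) a = a.
Proof.
  apply (ext_inj G).
  rewrite i_dot, (hom0 (ext_s G)), (oppr0 (extM G)), (add0r (extM G)), (addr0 (extM G)).
  reflexivity.
Qed.

Lemma dotDl b c a : dot (add b c) a = dot b (dot c a).
Proof.
  apply (ext_inj G). rewrite !i_dot, (homD (ext_s G)), (opprD (extM G)).
  repeat rewrite (addrA (extM G)). reflexivity.
Qed.

Lemma dotNK b a : dot (opp b) (dot b a) = a.
Proof. rewrite <- dotDl, (addNr (extB G)), dot0l. reflexivity. Qed.

Lemma dotKN b a : dot b (dot (opp b) a) = a.
Proof. rewrite <- dotDl, (addrN (extB G)), dot0l. reflexivity. Qed.

Lemma dotDr b a a' : dot b (add a a') = add (dot b a) (dot b a').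
Proof.
  apply (ext_inj G). rewrite (homD (ext_i G)), !i_dot, (homD (ext_i G)).
  repeat rewrite (addrA (extM G)). rewrite (addKr (extM G)). reflexivity.
Qed.

Lemma dotNr b a : dot b (opp a) = opp (dot b a).
Proof.
  apply (oppr_unique (extA G)). rewrite <- dotDr, (addrN (extA G)).
  apply (ext_inj G).
  rewrite i_dot, (hom0 (ext_i G)), (addr0 (extM G)), (addrN (extM G)). reflexivity.
Qed.

Lemma dot_binl o b c a : dot (bin o b c) a = a.
Proof.
  apply (ext_inj G).
  rewrite i_dot, (homB (ext_s G)), <- (add_binC (extM G)), (addrK (extM G)). reflexivity.
Qed.

Lemma opDl o b c a : op o (add b c) a = add (op o b a) (op o c a).
Proof.
  apply (ext_inj G). rewrite (homD (ext_i G)), !i_op, (homD (ext_s G)), (binDl (extM G)).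
  reflexivity.
Qed.

Lemma opNl o b a : op o (opp b) a = opp (op o b a).
Proof.
  apply (ext_inj G). rewrite (homN (ext_i G)), !i_op, (homN (ext_s G)), (binNl (extM G)).
  reflexivity.
Qed.

Lemma un_dot w b a : un w (dot b a) = dot (un w b) (un w a).
Proof.
  apply (ext_inj G).
  rewrite (homU (ext_i G)), !i_dot, !(unD (extM G)), (unN (extM G)), (homU (ext_s G)),
    (homU (ext_i G)).
  reflexivity.
Qed.

Lemma un_op w o b a : un w (op o b a) = op o (un w b) a.
Proof.
  apply (ext_inj G). rewrite (homU (ext_i G)), !i_op, <- (bin_unl (extM G)), (homU (ext_s G)).
  reflexivity.
Qed.

Lemma stabilizes_s b : stabilizes i (s b).
Proof.
  intros o a. split.
  - exists (op o b a). symmetry. apply i_op.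
  - exists (op (circ o) b a). apply bin_i_s.
Qed.

Lemma agree_on_s b b' : same b b' -> agree_on i (s b) (s b').
Proof. intros [_ Ho] o a. rewrite <- !i_op, !bin_i_s, !Ho. split; reflexivity. Qed.

Lemma same_action_add b b' c c' : same b b' -> same c c' -> same (add b c) (add b' c').
Proof.
  intros [Hd Ho] [Hd' Ho']. split.
  - intros a. rewrite !dotDl, Hd', Hd. reflexivity.
  - intros o a. rewrite !opDl, Ho, Ho'. reflexivity.
Qed.

Lemma same_action_opp b b' : same b b' -> same (opp b) (opp b').
Proof.
  intros [Hd Ho]. split.
  - intros a. rewrite <- (dotNK b' (dot (opp b) a)), <- Hd, dotKN. reflexivity.
  - intros o a. rewrite !opNl, Ho. reflexivity.
Qed.

Lemma same_action_bin o b b' c c' : same b b' -> same c c' -> same (bin o b c) (bin o b' c').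
Proof.
  intros Hb Hc. split.
  - intros a. rewrite !dot_binl. reflexivity.
  - intros o' a. apply (ext_inj G). rewrite !i_op, !(homB (ext_s G)).
    apply (agree_on_binl (extM G)); try apply agree_on_s; try apply stabilizes_s; assumption.
Qed.

Lemma split_decomp m : exists a, m = add (i a) (s (p m)).
Proof.
  destruct (ext_ker G (m := add m (opp (s (p m))))) as [a Ea].
  - rewrite (homD (ext_p G)), (homN (ext_p G)), (ext_ps G), (addrN (extB G)). reflexivity.
  - exists a. rewrite Ea, (addrNK (extM G)). reflexivity.
Qed.

Lemma nf_add a b a' b' :
  add (add (i a) (s b)) (add (i a') (s b')) = add (i (add a (dot b a'))) (s (add b b')).
Proof.
  rewrite (homD (ext_i G)), i_dot, (homD (ext_s G)).
  repeat rewrite (addrA (extM G)). rewrite (addKr (extM G)). reflexivity.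
Qed.

Lemma nf_opp a b : opp (add (i a) (s b)) = add (i (dot (opp b) (opp a))) (s (opp b)).
Proof.
  rewrite i_dot, (homN (ext_s G)), (homN (ext_i G)), (opprK (extM G)), (opprD (extM G)).
  repeat rewrite (addrA (extM G)). rewrite (addrN (extM G)), (addr0 (extM G)). reflexivity.
Qed.

Lemma nf_un w a b : un w (add (i a) (s b)) = add (i (un w a)) (s (un w b)).
Proof. rewrite (unD (extM G)), (homU (ext_i G)), (homU (ext_s G)). reflexivity. Qed.

Lemma nf_bin o a b a' b' :
  bin o (add (i a) (s b)) (add (i a') (s b'))
  = add (i (add (add (bin o a a') (op (circ o) b' a)) (op o b a'))) (s (bin o b b')).
Proof.
  rewrite (binDl (extM G)), !(binDr (extM G)), !(homD (ext_i G)), (homB (ext_i G)),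
    (homB (ext_s G)), (bin_i_s o a b'), <- (i_op o b a').
  repeat rewrite (addrA (extM G)). reflexivity.
Qed.

End InducedAction.

Definition un_iter (S : Sig) (X : alg S) (u : list (O1 S)) (x : car X) : car X :=
  fold_right (@un S X) x u.

Section UnaryIterates.
Context {S : Sig} {X : alg S} (H : interest_laws X).

Lemma un_iter_add u (x y : car X) : un_iter u (add x y) = add (un_iter u x) (un_iter u y).
Proof. induction u; cbn; [reflexivity|]. unfold un_iter in IHu. rewrite IHu, (unD H). reflexivity. Qed.

Lemma un_iter_opp u (x : car X) : un_iter u (opp x) = opp (un_iter u x).
Proof. induction u; cbn; [reflexivity|]. unfold un_iter in IHu. rewrite IHu, (unN H). reflexivity. Qed.

Lemma un_iter_binl u o (x y : car X) : un_iter u (bin o x y) = bin o (un_iter u x) y.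
Proof. induction u; cbn; [reflexivity|]. unfold un_iter in IHu. rewrite IHu, (bin_unl H). reflexivity. Qed.

End UnaryIterates.

Lemma un_iter_un (S : Sig) (X : alg S) u w (x : car X) :
  un_iter u (un w x) = un_iter (u ++ w :: nil) x.
Proof. unfold un_iter. rewrite fold_right_app. reflexivity. Qed.

Lemma un_iter_hom (S : Sig) (X Y : alg S) (f : car X -> car Y) (Hf : is_hom f) u x :
  f (un_iter u x) = un_iter u (f x).
Proof. induction u; cbn; [reflexivity|]. unfold un_iter in IHu. rewrite (homU Hf), IHu. reflexivity. Qed.

Section UnaryIteratesAction.
Context {S : Sig} {A B : alg S} {Et : split_ext A B} (G : ext_laws Et).
Context {dot : car B -> car A -> car A} {op : O2 S -> car B -> car A -> car A}.
Hypothesis Hi : induces Et dot op.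

Lemma un_iter_dot u b a : un_iter u (dot b a) = dot (un_iter u b) (un_iter u a).
Proof. induction u; cbn; [reflexivity|]. unfold un_iter in IHu. rewrite IHu, (un_dot G Hi). reflexivity. Qed.

Lemma un_iter_op u o b a : un_iter u (op o b a) = op o (un_iter u b) a.
Proof. induction u; cbn; [reflexivity|]. unfold un_iter in IHu. rewrite IHu, (un_op G Hi). reflexivity. Qed.

End UnaryIteratesAction.

Lemma mor_transports_action (S : Sig) (A B C : alg S) (X : split_ext A C) (Et : split_ext A B)
    (G : ext_laws Et) dotX opX dot op (HiX : induces X dotX opX) (Hi : induces Et dot op)
    g g' (Hm : split_ext_mor X Et g g') :
  (forall c a, dot (g' c) a = dotX c a) /\ (forall o c a, op o (g' c) a = opX o c a).
Proof.
  destruct Hm as [Hg [_ [Hgi [_ Hgs]]]]. split.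
  - intros c a. apply (ext_inj G).
    rewrite (i_dot Hi), <- Hgs, <- Hgi, <- (homN Hg), <- !(homD Hg), <- (i_dot HiX), Hgi.
    reflexivity.
  - intros o c a. apply (ext_inj G).
    rewrite (i_op Hi), <- Hgs, <- Hgi, <- (homB Hg), <- (i_op HiX), Hgi. reflexivity.
Qed.

Definition rebase (S : Sig) (A B : alg S) (Et : split_ext A B) (m : car (se_mid Et)) (b : car B) :=
  add (add m (opp (se_s Et (se_p Et m)))) (se_s Et b).

Section Retarget.
Context {S : Sig} {A B C : alg S} {Et : split_ext A B} (G : ext_laws Et).
Context {dot : car B -> car A -> car A} {op : O2 S -> car B -> car A -> car A}.
Hypothesis Hi : induces Et dot op.
Context {X : split_ext A C} (GX : ext_laws X).
Context {g : car (se_mid X) -> car (se_mid Et)} {g' : car C -> car B}.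
Hypothesis Hm : split_ext_mor X Et g g'.
Context {psi : car C -> car B}.
Hypothesis Hpsi : is_hom psi.
Hypothesis Hsame : forall c, same_action dot op (g' c) (psi c).
Local Notation i := (se_i Et).
Local Notation s := (se_s Et).

Lemma rebase_nf a b1 b : rebase (add (i a) (s b1)) b = add (i a) (s b).
Proof.
  unfold rebase. rewrite (homD (ext_p G)), (ext_pi G), (ext_ps G), (add0r (extB G)),
    (addrK (extM G)).
  reflexivity.
Qed.

Lemma mor_decomp n : exists a, g n = add (i a) (s (g' (se_p X n))).
Proof.
  destruct (split_decomp G (g n)) as [a Ea]. exists a.
  destruct Hm as [_ [_ [_ [Hgp _]]]]. rewrite <- Hgp. exact Ea.
Qed.

Lemma retarget_hom : is_hom (fun n => rebase (g n) (psi (se_p X n))).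
Proof.
  pose proof Hm as [Hg _].
  split; [|split; [|split; [|split]]].
  - rewrite (hom0 (ext_p GX)), (hom0 Hg), (hom0 Hpsi). unfold rebase.
    rewrite (hom0 (ext_p G)), (hom0 (ext_s G)), (oppr0 (extM G)), !(addr0 (extM G)).
    reflexivity.
  - intros n n'. rewrite (homD (ext_p GX)), (homD Hg), (homD Hpsi).
    destruct (mor_decomp n) as [a ->], (mor_decomp n') as [a' ->].
    rewrite (nf_add G Hi), !rebase_nf, (nf_add G Hi), (proj1 (Hsame _)). reflexivity.
  - intros n. rewrite (homN (ext_p GX)), (homN Hg), (homN Hpsi).
    destruct (mor_decomp n) as [a ->].
    rewrite (nf_opp G Hi), !rebase_nf, (nf_opp G Hi),
      (proj1 (same_action_opp G Hi (Hsame (se_p X n)))).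
    reflexivity.
  - intros w n. rewrite (homU (ext_p GX)), (homU Hg), (homU Hpsi).
    destruct (mor_decomp n) as [a ->].
    rewrite (nf_un G), !rebase_nf, (nf_un G). reflexivity.
  - intros o n n'. rewrite (homB (ext_p GX)), (homB Hg), (homB Hpsi).
    destruct (mor_decomp n) as [a ->], (mor_decomp n') as [a' ->].
    rewrite (nf_bin G Hi), !rebase_nf, (nf_bin G Hi), (proj2 (Hsame (se_p X n))),
      (proj2 (Hsame (se_p X n'))).
    reflexivity.
Qed.

Lemma retarget_mor : split_ext_mor X Et (fun n => rebase (g n) (psi (se_p X n))) psi.
Proof.
  pose proof Hm as [_ [_ [Hgi [_ Hgs]]]].
  split; [exact retarget_hom | split; [exact Hpsi | split; [|split]]].
  - intros a. rewrite (ext_pi GX), (hom0 Hpsi), Hgi. unfold rebase.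
    rewrite (ext_pi G), (hom0 (ext_s G)), (oppr0 (extM G)), !(addr0 (extM G)). reflexivity.
  - intros n. unfold rebase.
    rewrite !(homD (ext_p G)), (homN (ext_p G)), !(ext_ps G), (addrN (extB G)),
      (add0r (extB G)).
    reflexivity.
  - intros c. rewrite (ext_ps GX), Hgs. unfold rebase.
    rewrite (ext_ps G), (addrN (extM G)), (add0r (extM G)). reflexivity.
Qed.

End Retarget.

Lemma terminal_mor_base_unique (S : Sig) (E : identity S -> Prop) (A B C : alg S)
    (Et : split_ext A B) (Ht : terminal_split_ext E Et) (X : split_ext A C)
    (HX : is_split_ext E X) g1 g1' g2 g2' :
  split_ext_mor X Et g1 g1' -> split_ext_mor X Et g2 g2' -> forall c, g1' c = g2' c.
Proof.
  intros M1 M2 c. destruct (proj2 Ht C X HX) as [g [g' [_ U]]].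
  rewrite (proj2 (U _ _ M1)), (proj2 (U _ _ M2)). reflexivity.
Qed.

Lemma terminal_same_action_eq (S : Sig) (E : identity S -> Prop) (HC : cat_of_interest E)
    (A B C : alg S) (Et : split_ext A B) (Ht : terminal_split_ext E Et) dot op
    (Hi : induces Et dot op) (X : split_ext A C) (HX : is_split_ext E X) g g'
    (Hm : split_ext_mor X Et g g') (psi : car C -> car B) (Hpsi : is_hom psi) :
  (forall c, same_action dot op (g' c) (psi c)) -> forall c, psi c = g' c.
Proof.
  intros Hsame c.
  pose proof (retarget_mor (ext_laws_of HC (proj1 Ht)) Hi (ext_laws_of HC HX) Hm Hpsi Hsame)
    as Hm'.
  exact (terminal_mor_base_unique Ht HX Hm' Hm c).
Qed.

Section Pullback.
Context {S : Sig} {A B D : alg S} {Et : split_ext A B} (G : ext_laws Et).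
Context {f : car D -> car B} (Hf : is_hom f).
Local Notation i := (se_i Et).
Local Notation p := (se_p Et).
Local Notation s := (se_s Et).

Lemma pullback_closed : closed (X := prod_alg (se_mid Et) D) (fun q => p (fst q) = f (snd q)).
Proof.
  constructor.
  - cbn. rewrite (hom0 (ext_p G)), (hom0 Hf). reflexivity.
  - intros [m d] [m' d'] H H'; cbn in *. rewrite (homD (ext_p G)), (homD Hf), H, H'. reflexivity.
  - intros [m d] H; cbn in *. rewrite (homN (ext_p G)), (homN Hf), H. reflexivity.
  - intros w [m d] H; cbn in *. rewrite (homU (ext_p G)), (homU Hf), H. reflexivity.
  - intros o [m d] [m' d'] H H'; cbn in *.
    rewrite (homB (ext_p G)), (homB Hf), H, H'. reflexivity.
Qed.

Definition pullback_alg : alg S := sub_alg pullback_closed.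

Lemma pullback_i_mem a : p (i a) = f (zero D).
Proof. rewrite (ext_pi G), (hom0 Hf). reflexivity. Qed.

Definition pullback : split_ext A D :=
  {| se_mid := pullback_alg;
     se_i := fun a => exist _ (i a, zero D) (pullback_i_mem a) : car pullback_alg;
     se_p := fun n : car pullback_alg => snd (proj1_sig n);
     se_s := fun d => exist _ (s (f d), d) (ext_ps G (f d)) : car pullback_alg |}.

Lemma pullback_mor : split_ext_mor pullback Et (fun n => fst (proj1_sig n)) f.
Proof.
  split; [repeat split | split; [exact Hf | split; [|split]]].
  - intros a. reflexivity.
  - intros n. exact (proj2_sig n).
  - intros d. reflexivity.
Qed.

Lemma pullback_i_hom (LD : interest_laws D) : is_hom (se_i pullback).
Proof.
  split; [|split; [|split; [|split]]]; intros; apply sig_eq; cbn; f_equal.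
  - apply (hom0 (ext_i G)).
  - apply (homD (ext_i G)).
  - symmetry. apply (add0r LD).
  - apply (homN (ext_i G)).
  - symmetry. apply (oppr0 LD).
  - apply (homU (ext_i G)).
  - symmetry. apply (un0 LD).
  - apply (homB (ext_i G)).
  - symmetry. apply (bin0l LD).
Qed.

Lemma pullback_s_hom : is_hom (se_s pullback).
Proof.
  split; [|split; [|split; [|split]]]; intros; apply sig_eq; cbn; f_equal.
  - rewrite (hom0 Hf). apply (hom0 (ext_s G)).
  - rewrite (homD Hf). apply (homD (ext_s G)).
  - rewrite (homN Hf). apply (homN (ext_s G)).
  - rewrite (homU Hf). apply (homU (ext_s G)).
  - rewrite (homB Hf). apply (homB (ext_s G)).
Qed.

Lemma pullback_is_split_ext (E : identity S -> Prop) (HC : cat_of_interest E) :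
  in_var E A -> in_var E (se_mid Et) -> in_var E D -> is_split_ext E pullback.
Proof.
  intros HA HM HD.
  split; [exact HA | split; [apply in_var_sub, in_var_prod; assumption | split; [exact HD |]]].
  split; [exact (pullback_i_hom (interest_laws_of HC HD)) | split; [repeat split |]].
  split; [exact pullback_s_hom | split; [|split; [|split]]].
  - intros a a' Ea. apply (ext_inj G). exact (f_equal (fun n => fst (proj1_sig n)) Ea).
  - intros [[m d] Hmd]. cbn in Hmd |- *. split.
    + intros ->. destruct (ext_ker G (m := m)) as [a Ea].
      { rewrite Hmd. apply (hom0 Hf). }
      exists a. apply sig_eq. cbn. rewrite Ea. reflexivity.
    + intros [a Ea]. symmetry. exact (f_equal (fun n => snd (proj1_sig n)) Ea).
  - intros d. exists (se_s pullback d). reflexivity.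
  - intros d. reflexivity.
Qed.

End Pullback.

(* Acting alike on A is not stable under the unary operations (w(b).a is not
   determined by the action of b), hence the closure under iterates of them. *)
Definition act_equiv (S : Sig) (A B : alg S) (dot : car B -> car A -> car A)
    (op : O2 S -> car B -> car A -> car A) (b b' : car B) : Prop :=
  forall u, same_action dot op (un_iter u b) (un_iter u b').

Lemma act_equiv_closed (S : Sig) (A B : alg S) (Et : split_ext A B) (G : ext_laws Et) dot op
    (Hi : induces Et dot op) :
  closed (X := prod_alg B B) (fun q => act_equiv dot op (fst q) (snd q)).
Proof.
  constructor.
  - intros u. split; reflexivity.
  - intros [x x'] [y y'] Hx Hy u; cbn in *.
    rewrite !(un_iter_add (extB G)). apply (same_action_add G Hi); auto.
  - intros [x x'] Hx u; cbn in *. rewrite !(un_iter_opp (extB G)). apply (same_action_opp G Hi); auto.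
  - intros w [x x'] Hx u; cbn in *. rewrite !un_iter_un. apply Hx.
  - intros o [x x'] [y y'] Hx Hy u; cbn in *.
    rewrite !(un_iter_binl (extB G)). apply (same_action_bin G Hi); [apply Hx | apply (Hy nil)].
Qed.

(* The pairs acting alike form a subalgebra D of B x B; pulling E_t back along
   the first projection D -> B and retargeting to the second projection shows
   that both projections coincide. *)
Lemma terminal_action_faithful (S : Sig) (E : identity S -> Prop) (HC : cat_of_interest E)
    (A B : alg S) (Et : split_ext A B) (Ht : terminal_split_ext E Et) dot op
    (Hi : induces Et dot op) (b b' : car B) :
  act_equiv dot op b b' -> b = b'.
Proof.
  intros Hbb.
  pose proof (ext_laws_of HC (proj1 Ht)) as G.
  destruct (proj1 Ht) as [HA [HM [HB _]]].
  pose (D := sub_alg (act_equiv_closed G Hi)).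
  pose (f1 := fun d : car D => fst (proj1_sig d)).
  pose (f2 := fun d : car D => snd (proj1_sig d)).
  assert (Hf1 : is_hom f1) by (repeat split).
  assert (Hf2 : is_hom f2) by (repeat split).
  assert (HD : in_var E D) by (apply in_var_sub, in_var_prod; assumption).
  assert (Hsame : forall d, same_action dot op (f1 d) (f2 d)) by (intros d; exact (proj2_sig d nil)).
  symmetry.
  exact (terminal_same_action_eq HC Ht Hi (pullback_is_split_ext G Hf1 HC HA HM HD)
           (pullback_mor G Hf1) Hf2 Hsame (exist _ (b, b') Hbb)).
Qed.

Lemma EA_induces_conj (S : Sig) (A : alg S) (LA : interest_laws A) :
  induces (EA A) (@conj_dot S A) (@conj_op S A).
Proof.
  split.
  - intros b a. cbn. unfold conj_dot. f_equal;
      repeat rewrite ?(oppr0 LA), ?(addr0 LA), ?(add0r LA), ?(opprK LA), ?(addNr LA), ?(addrN LA);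
      reflexivity.
  - intros o b a. cbn. unfold conj_op.
    rewrite (bin0r LA), !(bin0l LA), !(add0r LA). reflexivity.
Qed.

Section TerminalCrossedModule.
Context {S : Sig} {E : identity S -> Prop} (HC : cat_of_interest E).
Context {A B : alg S} {Et : split_ext A B} (Ht : terminal_split_ext E Et).
Context {dot : car B -> car A -> car A} {op : O2 S -> car B -> car A -> car A}.
Hypothesis Hi : induces Et dot op.
Context {beta : car A -> car B} (Hbeta : is_hom beta).
Hypothesis dot_beta : forall a x, dot (beta a) x = conj_dot a x.
Hypothesis op_beta : forall o a x, op o (beta a) x = conj_op o a x.
Let G : ext_laws Et := ext_laws_of HC (proj1 Ht).

Lemma same_action_beta_dot r c :
  same_action dot op (beta (dot r c)) (add (add r (beta c)) (opp r)).
Proof.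
  split.
  - intros x. rewrite dot_beta, !(dotDl G Hi), dot_beta. unfold conj_dot.
    rewrite !(dotDr G Hi), (dotNr G Hi), (dotKN G Hi r x).
    repeat rewrite (addrA (extA G)). reflexivity.
  - intros o x. rewrite op_beta, !(opDl G Hi), (opNl G Hi), op_beta. unfold conj_op.
    rewrite (conj_bin (extA G)). apply (ext_inj G).
    rewrite !(homB (ext_i G)), (i_dot Hi), !(binDl (extM G)), (binNl (extM G)),
      (conj_bin (extM G)).
    reflexivity.
Qed.

Lemma same_action_beta_op o r c : same_action dot op (beta (op o r c)) (bin o r (beta c)).
Proof.
  split.
  - intros x. rewrite (dot_binl G Hi), dot_beta. unfold conj_dot. apply (ext_inj G).
    rewrite !(homD (ext_i G)), (homN (ext_i G)), (i_op Hi), <- (add_binC (extM G)),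
      (addrK (extM G)).
    reflexivity.
  - intros o' x. rewrite op_beta. unfold conj_op. apply (ext_inj G).
    rewrite (homB (ext_i G)), !(i_op Hi), (homB (ext_s G)).
    apply (agree_on_binl (extM G)).
    + intros p a. split; reflexivity.
    + intros p a. rewrite <- (i_op Hi), (bin_i_s G Hi), !op_beta. unfold conj_op.
      rewrite (binC (extA G)), !(homB (ext_i G)). split; reflexivity.
    + apply (stabilizes_s G Hi).
    + apply (stabilizes_s G Hi).
Qed.

Lemma beta_dot r c : beta (dot r c) = add (add r (beta c)) (opp r).
Proof.
  apply (terminal_action_faithful HC Ht Hi). intros u.
  rewrite <- (un_iter_hom Hbeta), (un_iter_dot G Hi), !(un_iter_add (extB G)),
    (un_iter_opp (extB G)), <- (un_iter_hom Hbeta).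
  apply same_action_beta_dot.
Qed.

Lemma beta_op o r c : beta (op o r c) = bin o r (beta c).
Proof.
  apply (terminal_action_faithful HC Ht Hi). intros u.
  rewrite <- (un_iter_hom Hbeta), (un_iter_op G Hi), (un_iter_binl (extB G)).
  apply same_action_beta_op.
Qed.

Lemma terminal_crossed_module : crossed_module E beta dot op.
Proof.
  pose proof (proj1 Ht) as [HA [_ [HB _]]].
  split; [exact HA|split; [exact HB|split; [exact Hbeta|split; [|split; [|split; [|split; [|split]]]]]]].
  - exists Et. split; [exact (proj1 Ht) | exact Hi].
  - exact beta_dot.
  - exact dot_beta.
  - exact op_beta.
  - exact beta_op.
  - intros o r c. rewrite beta_op, (binC (extB G)). reflexivity.
Qed.

End TerminalCrossedModule.

Lemma terminal_is_actor (S : Sig) (E : identity S -> Prop) (HC : cat_of_interest E)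
    (A B : alg S) (Et : split_ext A B) (Ht : terminal_split_ext E Et) dot op
    (Hi : induces Et dot op) (d : car A -> car B) :
  crossed_module E d dot op -> is_actor E d dot op.
Proof.
  intros CM. split; [exact CM|].
  intros C _ dotC opC [X [HX HiX]].
  destruct (proj2 Ht C X HX) as [g [g' [Hm _]]].
  destruct (mor_transports_action (ext_laws_of HC (proj1 Ht)) HiX Hi Hm) as [Hdot Hop].
  exists g'. split.
  - split; [exact (proj1 (proj2 Hm)) | split; intros; symmetry; auto].
  - intros psi [Hpsi [Hd Ho]] c.
    apply (terminal_same_action_eq HC Ht Hi HX Hm Hpsi).
    intros c'. split; intros; rewrite ?Hdot, ?Hd, ?Hop, ?Ho; reflexivity.
Qed.

Theorem proposition3p8 (S : Sig) (E : identity S -> Prop)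
  (HC : cat_of_interest E) (A : alg S) (HA : in_var E A)
  (B : alg S) (Et : split_ext A B) (Hterm : terminal_split_ext E Et)
  (gamma : car (se_mid (EA A)) -> car (se_mid Et)) (beta : car A -> car B)
  (Hmor : split_ext_mor (EA A) Et gamma beta)
  (dot : car B -> car A -> car A) (op : O2 S -> car B -> car A -> car A)
  (Hind : induces Et dot op) :
  crossed_module E beta dot op /\ is_actor E beta dot op.
Proof.
  pose proof (ext_laws_of HC (proj1 Hterm)) as G.
  destruct (mor_transports_action G (EA_induces_conj (interest_laws_of HC HA)) Hind Hmor)
    as [Hdot Hop].
  pose proof (terminal_crossed_module HC Hterm Hind (proj1 (proj2 Hmor)) Hdot Hop) as CM.
  exact (conj CM (terminal_is_actor HC Hterm Hind CM)).
Qed.
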